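(* Let $\mathbf{X}$ be a real random variable with finite support $\{v_1,\dots,v_\ell\}$, taking value $v_i$ with probability $\alpha_i>0$, and let $\alpha=\min_i\alpha_i$. Let $p,q:\mathbb{R}^k\to\mathbb{R}$ be two functions such that the distributions of $p(\mathbf{X}^{\otimes k})$ and $q(\mathbf{X}^{\otimes k})$ are identical. Then any algorithm which, given access to independent noiseless labeled examples $(\mathbf{x},r(\mathbf{x}))$ with $\mathbf{x}\sim\mathbf{X}^{\otimes n}$, correctly (with high confidence) distinguishes between the two possibilities that $r(x)=p(x_{i_1},\dots,x_{i_k})$ for some $i_1,\dots,i_k\in[n]$, versus $r(x)=q(x_{i_1},\dots,x_{i_k})$ for some $i_1,\dots,i_k\in[n]$, must use $m=\Omega_{k,\ell,\alpha}(\log n)$ samples.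
   Context: $\mathbf{X}^{\otimes n}$ denotes a vector of $n$ i.i.d. copies of $\mathbf{X}$. The quantities $k,\ell,\alpha$ do not depend on $n$. *)

From HB Require Import structures.
From mathcomp Require Import all_boot all_order all_algebra.
From mathcomp Require Import reals exp.
Set Implicit Arguments. Unset Strict Implicit. Unset Printing Implicit Defensive.
Import Order.TTheory GRing.Theory Num.Theory.
Local Open Scope ring_scope.

(* The random variable X takes value v i with probability a i, i : 'I_l.
   A point of X^{(x)n} is encoded by the vector of value-indices z : 'I_n -> 'I_l,
   whose actual real value is (fun t => v (z t)). *)

Definition law (R : realType) (l k : nat) (v : 'I_l -> R) (a : 'I_l -> R)
  (f : ('I_k -> R) -> R) (y : R) : R :=
  \sum_(z : {ffun 'I_k -> 'I_l} | f (fun t => v (z t)) == y) \prod_(t < k) a (z t).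

Definition same_law (R : realType) (l k : nat) (v : 'I_l -> R) (a : 'I_l -> R)
  (p q : ('I_k -> R) -> R) : Prop :=
  forall y : R, law v a p y = law v a q y.

Definition junta (R : realType) (k n : nat) (f : ('I_k -> R) -> R) (I : 'I_k -> 'I_n)
  : ('I_n -> R) -> R := fun x => f (fun t => x (I t)).

(* A (possibly randomized) algorithm using m labeled examples: given the m examples
   (x^(j), r(x^(j))), it outputs "p" with probability A(examples) in [0,1]
   (its internal randomness being independent of the examples). *)
Definition algorithm (R : realType) (n m : nat) :=
  ('I_m -> ('I_n -> R) * R) -> R.

Definition accept_prob (R : realType) (l n m : nat) (v : 'I_l -> R) (a : 'I_l -> R)
  (r : ('I_n -> R) -> R) (A : algorithm R n m) : R :=
  \sum_(s : {ffun 'I_m -> {ffun 'I_n -> 'I_l}})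
     (\prod_(j < m) \prod_(i < n) a (s j i)) *
     A (fun j => ((fun i => v (s j i)), r (fun i => v (s j i)))).

Definition distinguishes (R : realType) (l k n m : nat) (v : 'I_l -> R) (a : 'I_l -> R)
  (p q : ('I_k -> R) -> R) (A : algorithm R n m) : Prop :=
  (forall I : 'I_k -> 'I_n, injective I -> accept_prob v a (junta p I) A >= 2/3) /\
  (forall I : 'I_k -> 'I_n, injective I -> accept_prob v a (junta q I) A <= 1/3).

From HB Require Import structures.
From mathcomp Require Import all_boot all_order all_algebra.
From mathcomp Require Import reals exp.
From mathcomp Require Import boolp ring lra zify.
Import Order.TTheory GRing.Theory Num.Theory.
Set Implicit Arguments. Unset Strict Implicit. Unset Printing Implicit Defensive.
Local Open Scope ring_scope.

(* Split the coordinates into about n/(k+1) disjoint blocks of k coordinates.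
   On every block the algorithm separates the junta p from the junta q with
   advantage 1/3, so the advantages sum to at least B/3 over the B blocks.  For
   a fixed sample this sum only depends on the numbers N_M of blocks showing
   each m x k value pattern M.  As p and q have the same law, replacing N_M by
   its deviation N_M - B w(M) from the mean does not change the sum, and
   x h <= x^2/8 + 2 (for |h| <= 1) with Var N_M <= B w(M) bounds it by
   B/8 + 2 l^(km).  Hence B <= 10 l^(km), that is log n = O(k m log l). *)

Section ProductWeights.
Variables (R : comRingType) (J I T : finType).

Lemma sum_ffun2_prod (f : J -> I -> T -> R) :
  \sum_(s : {ffun J -> {ffun I -> T}}) \prod_j \prod_i f j i (s j i)
  = \prod_j \prod_i \sum_x f j i x.
Proof.
rewrite -(bigA_distr_bigA (fun j (g : {ffun I -> T}) => \prod_i f j i (g i))).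
by apply: eq_bigr => j _; rewrite bigA_distr_bigA.
Qed.

Lemma prod_eq_ffun (U : eqType) (f g : {ffun I -> U}) :
  \prod_i ((f i == g i)%:R : R) = (f == g)%:R.
Proof.
have [->|neq_fg] := eqVneq f g; first by rewrite big1 // => i _; rewrite eqxx.
have [i neq_i] : exists i, f i != g i.
  apply/existsP; rewrite -negb_forall; apply: contra neq_fg => /forallP eq_fg.
  by apply/eqP/ffunP => i; apply/eqP.
by rewrite (bigD1 i) //= (negbTE neq_i) mul0r.
Qed.

Lemma sum_mul_indicator (f : T -> R) (x0 : T) : \sum_x f x * (x == x0)%:R = f x0.
Proof.
rewrite (bigD1 x0) //= eqxx mulr1 big1 ?addr0 // => x /negbTE ->.
by rewrite mulr0.
Qed.

Variable a : T -> R.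
Hypothesis sum_a : \sum_x a x = 1.

Definition sample_weight (s : {ffun J -> {ffun I -> T}}) : R :=
  \prod_j \prod_i a (s j i).

Lemma sum_sample_weight : \sum_s sample_weight s = 1.
Proof.
rewrite (sum_ffun2_prod (fun _ _ => a)).
by rewrite big1 // => j _; rewrite big1.
Qed.

(* Coordinates outside the range of [c] are summed out, each contributing [\sum_x a x = 1]. *)
Lemma sum_sample_weight_prod (K : finType) (c : K -> I) (g : J -> K -> T -> R) :
  injective c ->
  \sum_s sample_weight s * \prod_j \prod_t g j t (s j (c t))
  = \prod_j \prod_t \sum_x a x * g j t x.
Proof.
move=> inj_c.
pose f j i x := a x * \prod_t (if c t == i then g j t x else 1).
have -> : \sum_s sample_weight s * \prod_j \prod_t g j t (s j (c t))
          = \sum_(s : {ffun J -> {ffun I -> T}}) \prod_j \prod_i f j i (s j i).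
  apply: eq_bigr => s _; rewrite -big_split; apply: eq_bigr => j _ /=.
  rewrite big_split /= exchange_big /=; congr (_ * _); apply: eq_bigr => t _.
  by rewrite -big_mkcond (big_pred1 (c t)) // => i; rewrite eq_sym.
rewrite sum_ffun2_prod; apply: eq_bigr => j _.
rewrite (bigID (mem (c @: setT))) /= [X in _ * X]big1 ?mulr1; last first.
  move=> i ci; rewrite -[RHS]sum_a; apply: eq_bigr => x _.
  rewrite /f big1 ?mulr1 // => t _; case: eqP => // eq_ti.
  by rewrite -eq_ti imset_f ?inE in ci.
rewrite big_imset /=; last by move=> ? ? _ _; apply: inj_c.
rewrite (eq_bigl predT) => [|?]; last by rewrite inE.
apply: eq_bigr => t _; apply: eq_bigr => x _; rewrite /f; congr (_ * _).
rewrite (bigD1 t) //= eqxx big1 ?mulr1 // => t' neq_t't.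
by rewrite (inj_eq inj_c) (negbTE neq_t't).
Qed.

End ProductWeights.

Lemma sum_eq1_size_gt0 (R : nzSemiRingType) (l : nat) (a : 'I_l -> R) :
  \sum_i a i = 1 -> (0 < l)%N.
Proof.
by case: l a => // a; rewrite big_ord0 => /esym/eqP; rewrite oner_eq0.
Qed.

Lemma sum_by_fibres (R : pzSemiRingType) (T : finType) (Y : eqType) (S : seq Y)
    (f : T -> Y) (phi : T -> R) (H : Y -> R) :
  uniq S -> (forall x, f x \in S) ->
  \sum_x phi x * H (f x) = \sum_(y <- S) (\sum_x phi x * (f x == y)%:R) * H y.
Proof.
move=> uniq_S f_S.
under [RHS]eq_bigr do rewrite mulr_suml.
rewrite exchange_big /=; apply: eq_bigr => x _.
rewrite (bigD1_seq (f x)) //= eqxx mulr1 big1 ?addr0 // => y.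
by move=> /negbTE; rewrite eq_sym => ->; rewrite mulr0 mul0r.
Qed.

Section PatternLaw.
Variables (R : realType) (l k m : nat) (v a : 'I_l -> R).

Local Notation pattern := {ffun 'I_m -> {ffun 'I_k -> 'I_l}}.

Definition labels (f : ('I_k -> R) -> R) (M : pattern) : {ffun 'I_m -> R} :=
  [ffun j => f (fun t => v (M j t))].

Lemma sum_weight_labels_eq f (y : {ffun 'I_m -> R}) :
  \sum_(M : pattern) sample_weight a M * (labels f M == y)%:R
  = \prod_j law v a f (y j).
Proof.
pose F j (z : {ffun 'I_k -> 'I_l}) :=
  \prod_t a (z t) * (f (fun t => v (z t)) == y j)%:R.
rewrite (eq_bigr (fun j => \sum_z F j z)); last first.
  move=> j _; rewrite /law big_mkcond; apply: eq_bigr => z _ /=.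
  by rewrite /F; case: eqP; rewrite ?mulr1 ?mulr0.
rewrite bigA_distr_bigA; apply: eq_bigr => M _.
by rewrite -prod_eq_ffun -big_split; apply: eq_bigr => j _; rewrite ffunE.
Qed.

Lemma same_law_labels p q (H : {ffun 'I_m -> R} -> R) :
  same_law v a p q ->
  \sum_(M : pattern) sample_weight a M * H (labels p M)
  = \sum_(M : pattern) sample_weight a M * H (labels q M).
Proof.
move=> pq.
pose S := undup (codom (labels p) ++ codom (labels q)).
have uniq_S : uniq S by apply: undup_uniq.
rewrite (sum_by_fibres _ _ uniq_S); last first.
  by move=> M; rewrite mem_undup mem_cat codom_f.
rewrite (sum_by_fibres _ _ uniq_S); last first.
  by move=> M; rewrite mem_undup mem_cat codom_f orbT.
apply: eq_bigr => y _; rewrite !sum_weight_labels_eq.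
by congr (_ * _); apply: eq_bigr => j _; rewrite pq.
Qed.

End PatternLaw.

Lemma mul_le_sqr_div8 (R : realFieldType) (x h : R) :
  -1 <= h <= 1 -> x * h <= x ^+ 2 / 8 + 2.
Proof.
move=> /andP[h_ge h_le].
have : 0 <= (x - 4 * h) ^+ 2 by apply: sqr_ge0.
have : 0 <= (1 - h) * (1 + h) by apply: mulr_ge0; lra.
nra.
Qed.

Lemma ln_le_of_sqr_le_mul_pow (R : realType) (C L e n : nat) :
  (0 < C)%N -> (0 < L)%N -> (C ^ 2 <= n)%N -> (n <= C * L ^ e)%N ->
  ln (n%:R : R) <= 2 * (e%:R * ln L%:R).
Proof.
move=> C_gt0 L_gt0 Cn nCL.
have n_gt0 : (0 < n)%N by apply: leq_trans Cn; rewrite expn_gt0 C_gt0.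
have pos_nat j : (0 < j)%N -> (j%:R : R) \is Num.pos by rewrite posrE ltr0n.
have ln_n_le : ln (n%:R : R) <= ln C%:R + ln L%:R *+ e.
  rewrite -lnXn ?ltr0n // -lnM ?pos_nat //; last by rewrite posrE exprn_gt0 ?ltr0n.
  by rewrite -natrX -natrM ler_ln ?pos_nat ?muln_gt0 ?expn_gt0 ?C_gt0 ?L_gt0 // ler_nat.
have ln_C_le : ln (C%:R : R) *+ 2 <= ln n%:R.
  by rewrite -lnXn ?ltr0n // -natrX ler_ln ?pos_nat ?expn_gt0 ?C_gt0 // ler_nat.
rewrite mulr_natl; lra.
Qed.

(* Block [b] occupies the coordinates [b (k+1) + t], [t < k]; the stride [k+1]
   leaves [n %/ k.+1] blocks also when [k = 0]. *)
Lemma block_index_lt n k (b : 'I_(n %/ k.+1)) (t : 'I_k) : (b * k.+1 + t < n)%N.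
Proof.
have := ltn_ord b; have := ltn_ord t; have := leq_trunc_div n k.+1.
have : (b.+1 * k.+1 <= n %/ k.+1 * k.+1)%N by rewrite leq_mul2r ltn_ord orbT.
lia.
Qed.

Definition block n k (b : 'I_(n %/ k.+1)) (t : 'I_k) : 'I_n :=
  Ordinal (block_index_lt b t).

Lemma block_inj n k b : injective (@block n k b).
Proof. by move=> t t' /(congr1 val) /= eq_tt'; apply: val_inj => /=; lia. Qed.

Lemma block_neq n k b b' t t' : b != b' -> @block n k b t != block b' t'.
Proof.
apply: contraNneq => /(congr1 (fun i : 'I_n => val i %/ k.+1)%N) /=.
rewrite !divnMDl // !(divn_small (leqW (ltn_ord _))) !addn0.
by move/val_inj ->.
Qed.

Section BlockLowerBound.
Variables (R : realType) (k l n m : nat) (v a : 'I_l -> R).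
Variables (p q : ('I_k -> R) -> R) (A : algorithm R n m).
Hypotheses (a_gt0 : forall i, 0 < a i) (sum_a : \sum_i a i = 1).
Hypotheses (pq : same_law v a p q) (A01 : forall xs, 0 <= A xs <= 1).
Hypothesis A_dist : distinguishes v a p q A.

Local Notation B := (n %/ k.+1)%N.
Local Notation sample := {ffun 'I_m -> {ffun 'I_n -> 'I_l}}.
Local Notation pattern := {ffun 'I_m -> {ffun 'I_k -> 'I_l}}.
Local Notation w := (sample_weight a).

Definition block_pattern (b : 'I_B) (s : sample) : pattern :=
  [ffun j => [ffun t => s j (block b t)]].

Definition answer (s : sample) (y : {ffun 'I_m -> R}) : R :=
  A (fun j => ((fun i => v (s j i)), y j)).

Definition answer_gap (s : sample) (M : pattern) : R :=
  answer s (labels v p M) - answer s (labels v q M).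

Definition hit (b : 'I_B) (s : sample) (M : pattern) : R := (block_pattern b s == M)%:R.

Definition excess (s : sample) (M : pattern) : R := \sum_b hit b s M - B%:R * w M.

Definition advantage (b : 'I_B) : R :=
  accept_prob v a (junta p (block b)) A - accept_prob v a (junta q (block b)) A.

Lemma accept_prob_block r b :
  accept_prob v a (junta r (block b)) A
  = \sum_s w s * answer s (labels v r (block_pattern b s)).
Proof.
apply: eq_bigr => s _; congr (_ * A _); apply: funext => j.
by rewrite !ffunE; congr (_, r _); apply: funext => t; rewrite !ffunE.
Qed.

Lemma hit_prod b s M : hit b s M = \prod_j \prod_t (s j (block b t) == M j t)%:R.
Proof.
rewrite /hit -prod_eq_ffun; apply: eq_bigr => j _.
by rewrite ffunE -prod_eq_ffun; apply: eq_bigr => t _; rewrite ffunE.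
Qed.

Lemma sum_weight_hit b M : \sum_s w s * hit b s M = w M.
Proof.
under eq_bigr do rewrite hit_prod.
rewrite (sum_sample_weight_prod sum_a (fun j t x => (x == M j t)%:R)) //.
  by apply: eq_bigr => j _; apply: eq_bigr => t _; apply: sum_mul_indicator.
exact: block_inj.
Qed.

(* Distinct blocks see disjoint sets of coordinates, hence independent patterns. *)
Lemma sum_weight_hit2 b b' M :
  b != b' -> \sum_s w s * (hit b s M * hit b' s M) = w M ^+ 2.
Proof.
move=> neq_bb'.
pose c (u : 'I_k + 'I_k) := match u with inl t => block b t | inr t => block b' t end.
pose o (u : 'I_k + 'I_k) := match u with inl t | inr t => t end.
have inj_c : injective c.
  case=> t [] t' //= eq_c; rewrite ?(block_inj eq_c) //.
  - by move: (block_neq t t' neq_bb'); rewrite eq_c eqxx.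
  - by move: (block_neq t' t neq_bb'); rewrite eq_c eqxx.
have -> : \sum_s w s * (hit b s M * hit b' s M)
          = \sum_s w s * \prod_j \prod_u (s j (c u) == M j (o u))%:R.
  apply: eq_bigr => s _; rewrite !hit_prod -big_split /=; congr (_ * _).
  by apply: eq_bigr => j _; rewrite big_sumType.
rewrite (sum_sample_weight_prod sum_a (fun j u x => (x == M j (o u))%:R)) //.
rewrite expr2 -big_split /=; apply: eq_bigr => j _.
by rewrite big_sumType /=; congr (_ * _); apply: eq_bigr => t _;
  apply: sum_mul_indicator.
Qed.

Lemma sample_weight_ge0 (s : sample) : 0 <= w s.
Proof. by apply: prodr_ge0 => j _; apply: prodr_ge0 => i _; apply: ltW. Qed.

Lemma hit_covariance b b' M :
  \sum_s w s * ((hit b s M - w M) * (hit b' s M - w M))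
  = (b == b')%:R * (w M - w M ^+ 2).
Proof.
rewrite (eq_bigr (fun s => w s * (hit b s M * hit b' s M) - w M * (w s * hit b s M)
                           - w M * (w s * hit b' s M) + w M ^+ 2 * w s)); last first.
  by move=> s _ /=; ring.
rewrite !big_split /= !sumrN -!mulr_sumr !sum_weight_hit sum_sample_weight //.
have [<-|neq_bb'] := eqVneq b b'; last by rewrite sum_weight_hit2 // mul0r; ring.
under eq_bigr do rewrite /hit -natrM mulnb andbb.
by rewrite sum_weight_hit mul1r; ring.
Qed.

(* The number of blocks showing the pattern [M] is binomial with parameters
   [B] and [w M]; [excess] is its deviation from the mean. *)
Lemma excess_second_moment M : \sum_s w s * excess s M ^+ 2 <= B%:R * w M.
Proof.
have excess_sum s : excess s M = \sum_b (hit b s M - w M).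
  by rewrite /excess sumrB sumr_const card_ord mulr_natl.
rewrite (eq_bigr (fun s => \sum_b \sum_b' w s * ((hit b s M - w M) * (hit b' s M - w M))));
  last first.
  move=> s _; rewrite excess_sum expr2 mulr_suml mulr_sumr; apply: eq_bigr => b _.
  by rewrite !mulr_sumr.
rewrite exchange_big /=.
under eq_bigr do rewrite exchange_big /= (eq_bigr _ (fun b' _ => hit_covariance _ b' M)).
under eq_bigr => b _.
  rewrite (bigD1 b) //= eqxx mul1r big1 ?addr0 => [|b' neq_b'b]; last first.
    by rewrite eq_sym (negbTE neq_b'b) mul0r.
  over.
rewrite sumr_const card_ord -[_ *+ B]mulr_natl; apply: ler_wpM2l => //.
by rewrite gerBl sqr_ge0.
Qed.

Lemma sum_advantage_ge : B%:R / 3 <= \sum_b advantage b.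
Proof.
have adv_ge b : 1 / 3 <= advantage b.
  have [acc_p acc_q] := A_dist.
  have := acc_p _ (@block_inj n k b); have := acc_q _ (@block_inj n k b).
  rewrite /advantage; lra.
apply: le_trans (ler_sum _ (fun b _ => adv_ge b)).
rewrite sumr_const card_ord -mulr_natl; lra.
Qed.

Lemma sum_weight_answer_gap s : \sum_M w M * answer_gap s M = 0.
Proof.
under eq_bigr do rewrite mulrBr.
by rewrite sumrB (same_law_labels _ pq) subrr.
Qed.

Lemma sum_advantage_excess :
  \sum_b advantage b = \sum_s w s * \sum_M excess s M * answer_gap s M.
Proof.
under eq_bigr do rewrite /advantage !accept_prob_block -sumrB.
rewrite exchange_big /=; apply: eq_bigr => s _.
under eq_bigr do rewrite -mulrBr.
rewrite -mulr_sumr; congr (_ * _).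
transitivity (\sum_M (\sum_b hit b s M) * answer_gap s M).
  rewrite (eq_bigr (fun b => \sum_M hit b s M * answer_gap s M)).
    by rewrite exchange_big; apply: eq_bigr => M _; rewrite mulr_suml.
  move=> b _; rewrite (bigD1 (block_pattern b s)) //= /hit eqxx mul1r big1 ?addr0 //.
  by move=> M; rewrite eq_sym => /negbTE ->; rewrite mul0r.
rewrite (eq_bigr (fun M => excess s M * answer_gap s M + B%:R * (w M * answer_gap s M))).
  by rewrite big_split /= -mulr_sumr sum_weight_answer_gap mulr0 addr0.
by move=> M _; rewrite /excess; ring.
Qed.

Lemma sum_advantage_le : \sum_b advantage b <= B%:R / 8 + 2 * (l ^ (k * m))%:R.
Proof.
rewrite sum_advantage_excess.
have gap_le s M : excess s M * answer_gap s M <= excess s M ^+ 2 / 8 + 2.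
  have answer01 y : 0 <= answer s y <= 1 by apply: A01.
  have /andP[? ?] := answer01 (labels v p M).
  have /andP[? ?] := answer01 (labels v q M).
  by apply: mul_le_sqr_div8; rewrite /answer_gap; apply/andP; split; lra.
apply: (@le_trans _ _ (\sum_s w s * \sum_M (excess s M ^+ 2 / 8 + 2))).
  apply: ler_sum => s _; apply: ler_wpM2l; first exact: sample_weight_ge0.
  by apply: ler_sum => M _; apply: gap_le.
under eq_bigr do rewrite mulr_sumr.
rewrite exchange_big /= (eq_bigr (fun M => (\sum_s w s * excess s M ^+ 2) / 8 + 2 * \sum_(s : sample) w s));
  last by move=> M _; rewrite mulr_suml mulr_sumr -big_split; apply: eq_bigr => s _ /=; ring.
rewrite sum_sample_weight // mulr1 big_split /= sumr_const -[2 *+ _]mulr_natr.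
rewrite !card_ffun !card_ord -expnM; apply: lerD => //.
rewrite -mulr_suml ler_pM2r ?invr_gt0 //.
apply: le_trans (ler_sum _ (fun M _ => excess_second_moment M)) _.
by rewrite -mulr_sumr sum_sample_weight // mulr1.
Qed.

Lemma blocks_le : (B <= 10 * l ^ (k * m))%N.
Proof.
have := le_trans sum_advantage_ge sum_advantage_le.
have : 0 <= (l ^ (k * m))%:R :> R by [].
by rewrite -(ler_nat R) natrM; lra.
Qed.

Lemma dim_le : (n <= 11 * k.+1 * l ^ (k * m))%N.
Proof.
have := blocks_le; have := ltn_ceil n (ltn0Sn k).
have : (0 < l ^ (k * m))%N by rewrite expn_gt0 (sum_eq1_size_gt0 sum_a).
nia.
Qed.

End BlockLowerBound.

Theorem theorem8p1 (R : realType) (k l : nat) (alpha : R) :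
  exists c : R, 0 < c /\ exists N : nat,
  forall (v : 'I_l -> R) (a : 'I_l -> R),
    injective v ->
    (forall i, 0 < a i) ->
    \sum_(i < l) a i = 1 ->
    (forall i, alpha <= a i) -> (exists i, a i = alpha) ->
  forall p q : ('I_k -> R) -> R,
    same_law v a p q ->
  forall (n m : nat) (A : algorithm R n m),
    (N <= n)%N ->
    (forall xs, 0 <= A xs <= 1) ->
    distinguishes v a p q A ->
    c * ln (n%:R) <= m%:R.
Proof.
have ln_l_ge0 : 0 <= ln (l%:R : R).
  by have [->|l_gt0] := posnP l; [rewrite ln0 | rewrite ln_ge0 // ler1n].
have K_ge0 : 0 <= k%:R * ln (l%:R : R) by apply: mulr_ge0.
exists (2 * (k%:R * ln l%:R) + 2)^-1; split; first by rewrite invr_gt0; lra.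
exists ((11 * k.+1) ^ 2)%N => v a _ a_gt0 sum_a _ _ p q pq n m A Cn A01 A_dist.
have C_gt0 : (0 < 11 * k.+1)%N by rewrite muln_gt0.
have := ln_le_of_sqr_le_mul_pow R C_gt0 (sum_eq1_size_gt0 sum_a) Cn
  (dim_le a_gt0 sum_a pq A01 A_dist).
rewrite natrM => ln_n_le.
rewrite mulrC ler_pdivrMr ?ltr_wpDl ?mulr_ge0 //.
have : 0 <= m%:R :> R by [].
nra.
Qed.
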